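(* Let $\mathcal A$ be a bialgebra with unit, comultiplication $\Delta$ and counit $\varepsilon$, and let $\mathcal A_1,\mathcal A_2\subset\mathcal A$ be subalgebras such that the multiplication map $\mu:\mathcal A_1\otimes\mathcal A_2\to\mathcal A$ is a linear isomorphism, $\Delta(\mathcal A_1)\subset\mathcal A\otimes\mathcal A_1$ and $\Delta(\mathcal A_2)\subset\mathcal A_2\otimes\mathcal A$. Define $\Pi_1,\Pi_2:\mathcal A\to\mathcal A$ by $\Pi_1(a_1a_2)=a_1\varepsilon(a_2)$, $\Pi_2(a_1a_2)=\varepsilon(a_1)a_2$ for $a_1\in\mathcal A_1$, $a_2\in\mathcal A_2$. Then for every $a\in\mathcal A$, $$\mu(\Pi_1\otimes\Pi_2)\Delta(a)=a.$$
   Context: Sweedler notation: $\Delta(a)=a'\otimes a''$; the claim reads $\Pi_1(a')\Pi_2(a'')=a$. *)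

(* Bialgebras over a field K, with elements of A (x) A encoded
   as finite lists of simple tensors (Sweedler sums). *)
From mathcomp Require Import all_boot all_algebra.
Set Implicit Arguments. Unset Strict Implicit. Unset Printing Implicit Defensive.
Import GRing.Theory.
Local Open Scope ring_scope.

Section Bialg.
Variables (K : fieldType) (A : algType K).

Definition lin_functional (f : A -> K) : Prop :=
  forall (k : K) (x y : A), f (k *: x + y) = k * f x + f y.

Definition lin_endo (f : A -> A) : Prop :=
  forall (k : K) (x y : A), f (k *: x + y) = k *: f x + f y.

(* A list t = [:: (x_1,y_1); ...] represents the tensor \sum_i x_i (x) y_i.
   tpair f g t is the evaluation of (f (x) g) on that tensor. *)
Definition tpair (f g : A -> K) (t : seq (A * A)) : K :=
  \sum_(p <- t) f p.1 * g p.2.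

(* Equality of tensors in A (x) A (over a field, two tensors are equal iff
   all f (x) g with f, g linear functionals agree on them). *)
Definition teq (t s : seq (A * A)) : Prop :=
  forall f g, lin_functional f -> lin_functional g -> tpair f g t = tpair f g s.

Definition tmul (t s : seq (A * A)) : seq (A * A) :=
  [seq (p.1 * q.1, p.2 * q.2) | p <- t, q <- s].

Record is_bialgebra (Delta : A -> seq (A * A)) (eps : A -> K) : Prop := {
  Delta_lin : forall (k : K) (a b : A) f g, lin_functional f -> lin_functional g ->
    tpair f g (Delta (k *: a + b)) = k * tpair f g (Delta a) + tpair f g (Delta b);
  Delta_mul : forall a b : A, teq (Delta (a * b)) (tmul (Delta a) (Delta b));
  Delta_one : teq (Delta 1) [:: (1, 1)];
  Delta_coassoc : forall (a : A) f g h,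
    lin_functional f -> lin_functional g -> lin_functional h ->
    \sum_(p <- Delta a) tpair f g (Delta p.1) * h p.2
    = \sum_(p <- Delta a) f p.1 * tpair g h (Delta p.2);
  eps_lin : lin_functional eps;
  eps_mul : forall a b : A, eps (a * b) = eps a * eps b;
  eps_one : eps 1 = 1;
  counit_l : forall a : A, \sum_(p <- Delta a) eps p.1 *: p.2 = a;
  counit_r : forall a : A, \sum_(p <- Delta a) eps p.2 *: p.1 = a
}.

End Bialg.

(* For a1 in A1 and a2 in A2, write Delta(a1) = a1' (x) a1'' with a1'' in A1
   and Delta(a2) = a2' (x) a2'' with a2' in A2.  Since Pi1 is right A2-linear
   up to eps and Pi2 is left A1-linear up to eps,
     Pi1(a1' a2') Pi2(a1'' a2'') = Pi1(eps(a1'') a1') Pi2(eps(a2') a2'')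
                                 = Pi1(a1) Pi2(a2) = a1 a2
   by the counit axioms, and the claim follows for every a since mu is onto
   and both sides are linear in a.
   Tensors are lists of simple tensors compared through pairs of linear
   functionals, so rewriting a Sweedler sum needs that every bilinear map
   factors through such comparisons; coordinate functionals of a Hamel basis
   (obtained by Zorn's lemma) provide this. *)

From mathcomp Require Import all_boot all_algebra.
From mathcomp Require Import boolp classical_sets.
Import GRing.Theory.
Set Implicit Arguments. Unset Strict Implicit. Unset Printing Implicit Defensive.
Local Open Scope ring_scope.
Local Open Scope classical_set_scope.

Section FormalCombinations.
Variables (K : fieldType) (V : lmodType K).
Implicit Types (B : set V) (l : seq (K * V)).

Definition lcoef (b : V) l : K := \sum_(q <- l) (if q.2 == b then q.1 else 0).
Definition lcomb l : V := \sum_(q <- l) q.1 *: q.2.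
Definition lscale (k : K) l := [seq (k * q.1, q.2) | q <- l].
Definition supported B l := forall q, q \in l -> B q.2.
Definition free_set B :=
  forall l, supported B l -> lcomb l = 0 -> forall b, lcoef b l = 0.
Definition spanned_by B (x : V) := exists2 l, supported B l & lcomb l = x.

Lemma lcoef_nil b : lcoef b [::] = 0.
Proof. by rewrite /lcoef big_nil. Qed.

Lemma lcoef_cat b l1 l2 : lcoef b (l1 ++ l2) = lcoef b l1 + lcoef b l2.
Proof. by rewrite /lcoef big_cat. Qed.

Lemma lcomb_cat l1 l2 : lcomb (l1 ++ l2) = lcomb l1 + lcomb l2.
Proof. by rewrite /lcomb big_cat. Qed.

Lemma lcoef_scale b k l : lcoef b (lscale k l) = k * lcoef b l.
Proof.
rewrite /lcoef big_map mulr_sumr; apply: eq_bigr => q _ /=.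
by case: ifP; rewrite ?mulr0.
Qed.

Lemma lcomb_scale k l : lcomb (lscale k l) = k *: lcomb l.
Proof.
by rewrite /lcomb big_map scaler_sumr; apply: eq_bigr => q _; rewrite scalerA.
Qed.

Lemma supported_cat B l1 l2 :
  supported B l1 -> supported B l2 -> supported B (l1 ++ l2).
Proof. by move=> h1 h2 q; rewrite mem_cat => /orP[/h1|/h2]. Qed.

Lemma supported_scale B k l : supported B l -> supported B (lscale k l).
Proof. by move=> h q /mapP[q' /h ? ->]. Qed.

Lemma lcomb_split x l :
  lcomb l = lcoef x l *: x + lcomb [seq q <- l | q.2 != x].
Proof.
elim: l => [|q l IH]; first by rewrite /lcomb /lcoef !big_nil scale0r addr0.
rewrite /= /lcomb /lcoef !big_cons -/(lcomb l) -/(lcoef x l) IH.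
case: eqP => [->|_] /=; rewrite ?big_cons /=; first by rewrite scalerDl addrA.
by rewrite add0r addrCA.
Qed.

Lemma lcoef_filter b x l :
  lcoef b [seq q <- l | q.2 != x] = if b == x then 0 else lcoef b l.
Proof.
elim: l => [|q l IH]; first by rewrite lcoef_nil; case: ifP.
rewrite /= /lcoef big_cons -/(lcoef b l).
case: eqP => [qx|qx] /=.
  rewrite -/(lcoef b [seq q <- l | q.2 != x]) IH; case: eqP => [//|bx].
  by rewrite qx (negbTE (introN eqP (nesym bx))) add0r.
rewrite big_cons /= -/(lcoef b [seq q <- l | q.2 != x]) IH.
by case: (b =P x) => [->|//]; rewrite (negbTE (introN eqP qx)) addr0.
Qed.

Lemma lcomb_coefE (S : seq V) l : uniq S -> (forall q, q \in l -> q.2 \in S) ->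
  \sum_(b <- S) lcoef b l *: b = lcomb l.
Proof.
move=> uS; elim: l => [|q l IH] lS.
  by rewrite /lcomb big_nil; apply: big1 => b _; rewrite lcoef_nil scale0r.
rewrite /lcomb big_cons -/(lcomb l) -IH;
  last by move=> r r_l; rewrite lS ?inE ?r_l ?orbT.
rewrite (eq_bigr (fun b => (if b == q.2 then q.1 *: b else 0) + lcoef b l *: b));
  last first.
  move=> b _; rewrite /lcoef big_cons -/(lcoef b l) scalerDl eq_sym.
  by case: eqP => // _; rewrite scale0r.
rewrite big_split /= (bigD1_seq q.2) ?lS ?mem_head //=.
by rewrite eqxx big1 ?addr0 // => b /negbTE ->.
Qed.

Lemma supported_chain (F : set (set V)) l :
  total_on F subset -> supported (\bigcup_(X in F) X) l ->
  l = [::] \/ exists2 X, F X & supported X l.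
Proof.
move=> totF; elim: l => [|q l IH] lF; first by left.
right; have [X FX Xq] := lF q (mem_head _ _).
have [->|[Y FY lY]] := IH (fun r r_l => lF r (@mem_behead _ (q :: l) r r_l)).
  by exists X => // r; rewrite inE => /eqP ->.
have [XY|YX] := totF _ _ FX FY.
  by exists Y => // r; rewrite inE => /orP[/eqP ->|/lY]; [exact: XY|].
by exists X => // r; rewrite inE => /orP[/eqP ->|/lY/YX].
Qed.

Lemma exists_basis : exists2 B, free_set B & forall x, spanned_by B x.
Proof.
have [B [freeB maxB]] : exists B, free_set B /\ forall C, B `<` C -> ~ free_set C.
  apply: Zorn_bigcup => F Ffree totF l lF l0 b.
  have [->|[X FX lX]] := supported_chain totF lF; first exact: lcoef_nil.
  exact: (Ffree X FX).
exists B => // x; apply: contrapT => x_out.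
have nBx : ~ B x.
  move=> Bx; apply: x_out; exists [:: (1, x)].
    by move=> q; rewrite inE => /eqP ->.
  by rewrite /lcomb big_seq1 scale1r.
apply: (maxB (B `|` [set x])).
  by split=> [y By|/(_ x (or_intror erefl))//]; left.
move=> l lBx l0 b.
have lB : supported B [seq q <- l | q.2 != x].
  by move=> q; rewrite mem_filter => /andP[/eqP qx /lBx[]].
have cx : lcoef x l = 0.
  apply: contrapT => /eqP cx_neq0; apply: x_out.
  exists (lscale (- (lcoef x l)^-1) [seq q <- l | q.2 != x]).
    exact: supported_scale.
  move: l0; rewrite lcomb_scale (lcomb_split x) => /eqP.
  rewrite addrC addr_eq0 => /eqP ->.
  by rewrite scalerN scaleNr opprK scalerA mulVf // scale1r.
have l0' : lcomb [seq q <- l | q.2 != x] = 0.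
  by move: l0; rewrite (lcomb_split x) cx scale0r add0r.
by have := freeB _ lB l0' b; rewrite lcoef_filter; case: eqP => [->|].
Qed.

(* [c b] is the coordinate along [b] in a Hamel basis, and [S] lists the basis
   vectors occurring in the vectors of [vs]. *)
Lemma coordinate_expansion (vs : seq V) :
  exists (S : seq V) (c : V -> V -> K),
    (forall b k x y, c b (k *: x + y) = k * c b x + c b y) /\
    (forall x, x \in vs -> x = \sum_(b <- S) c b x *: b).
Proof.
have [B freeB spanB] := exists_basis.
have /choice[rep repP] : forall x, exists l, supported B l /\ lcomb l = x.
  by move=> x; have [l] := spanB x; exists l.
exists (undup (flatten [seq [seq q.2 | q <- rep x] | x <- vs])).
exists (fun b x => lcoef b (rep x)); split.
  move=> b k x y.
  pose d := rep (k *: x + y) ++ lscale (-1) (lscale k (rep x) ++ rep y).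
  have dB : supported B d.
    apply: supported_cat; first exact: (repP _).1.
    apply: supported_scale; apply: supported_cat; last exact: (repP _).1.
    exact: supported_scale (repP _).1.
  have d0 : lcomb d = 0.
    rewrite lcomb_cat lcomb_scale lcomb_cat lcomb_scale !(proj2 (repP _)).
    by rewrite scaleN1r subrr.
  have /eqP := freeB d dB d0 b.
  by rewrite !(lcoef_cat, lcoef_scale) mulN1r subr_eq0 => /eqP.
move=> x x_vs; rewrite lcomb_coefE ?(repP x).2 ?undup_uniq // => q q_x.
by rewrite mem_undup; apply/flatten_mapP; exists x => //; apply: map_f.
Qed.

End FormalCombinations.

Section BilinearOperations.
Variables (K : fieldType) (U W : lmodType K).
Implicit Types B : U -> U -> W.

Definition bilinear_op B :=
  (forall z k x y, B (k *: x + y) z = k *: B x z + B y z) /\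
  (forall z k x y, B z (k *: x + y) = k *: B z x + B z y).

Lemma bilinear_op_flip B : bilinear_op B -> bilinear_op (fun x y => B y x).
Proof. by case. Qed.

Lemma bilinear_op0l B y : bilinear_op B -> B 0 y = 0.
Proof.
case=> linl _; have := linl y 1 0 0.
by rewrite !scale1r addr0 -[LHS]addr0 => /addrI.
Qed.

Lemma bilinear_opZl B k x y : bilinear_op B -> B (k *: x) y = k *: B x y.
Proof.
by move=> hB; rewrite -[k *: x]addr0 hB.1 bilinear_op0l // addr0.
Qed.

Lemma bilinear_op_suml B I (r : seq I) (k : I -> K) (v : I -> U) y :
  bilinear_op B -> B (\sum_(i <- r) k i *: v i) y = \sum_(i <- r) k i *: B (v i) y.
Proof.
move=> hB; elim: r => [|i r IH]; first by rewrite !big_nil bilinear_op0l.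
by rewrite !big_cons hB.1 IH.
Qed.

Lemma bilinear_op_sumr B I (r : seq I) (k : I -> K) (v : I -> U) y :
  bilinear_op B -> B y (\sum_(i <- r) k i *: v i) = \sum_(i <- r) k i *: B y (v i).
Proof.
by move=> /bilinear_op_flip hB; rewrite (bilinear_op_suml (B := fun x y => B y x)).
Qed.

Lemma bilinear_op_sum I (r : seq I) (B : I -> U -> U -> W) :
  (forall i, bilinear_op (B i)) -> bilinear_op (fun x y => \sum_(i <- r) B i x y).
Proof.
move=> hB; split=> z k x y; rewrite scaler_sumr -big_split;
  by apply: eq_bigr => i _; rewrite (hB i).1 || rewrite (hB i).2.
Qed.

End BilinearOperations.

Section TensorTransfer.
Variables (K : fieldType) (A : algType K) (W : lmodType K).
Implicit Types (B : A -> A -> W) (t s : seq (A * A)).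

Lemma sum_bilinear_tpair B (S : seq A) (c : A -> A -> K) t :
    bilinear_op B ->
    (forall p, p \in t -> p.1 = \sum_(b <- S) c b p.1 *: b /\
                          p.2 = \sum_(b <- S) c b p.2 *: b) ->
  \sum_(p <- t) B p.1 p.2
    = \sum_(b <- S) \sum_(b' <- S) tpair (c b) (c b') t *: B b b'.
Proof.
move=> hB expand.
under eq_big_seq => p /expand[-> ->].
  rewrite bilinear_op_suml //.
  under eq_bigr => b _ do rewrite bilinear_op_sumr // scaler_sumr.
  under eq_bigr => b _ do under eq_bigr => b' _ do rewrite scalerA.
over.
rewrite exchange_big; apply: eq_bigr => b _.
rewrite exchange_big; apply: eq_bigr => b' _.
by rewrite /tpair scaler_suml.
Qed.

(* Expanding in coordinates, both sums become combinations of the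
   [tpair (c b) (c b') _], on which [teq] applies. *)
Lemma teq_sum_bilinear B t s : teq t s -> bilinear_op B ->
  \sum_(p <- t) B p.1 p.2 = \sum_(p <- s) B p.1 p.2.
Proof.
move=> ts hB.
pose vs := [seq p.1 | p <- t ++ s] ++ [seq p.2 | p <- t ++ s].
have [S [c [c_lin expand]]] := coordinate_expansion vs.
have expand_in r : {subset r <= t ++ s} -> forall p, p \in r ->
    p.1 = \sum_(b <- S) c b p.1 *: b /\ p.2 = \sum_(b <- S) c b p.2 *: b.
  by move=> rts p /rts p_ts; split; apply: expand; rewrite mem_cat map_f ?orbT.
rewrite !(sum_bilinear_tpair (S := S) (c := c)) //; last 2 first.
- by apply: expand_in => p; rewrite mem_cat => ->; rewrite orbT.
- by apply: expand_in => p; rewrite mem_cat => ->.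
apply: eq_bigr => b _; apply: eq_bigr => b' _.
by rewrite (ts _ _ (c_lin b) (c_lin b')).
Qed.

Lemma bilinear_op_mull B u v :
  bilinear_op B -> bilinear_op (fun x y => B (u * x) (v * y)).
Proof. by case=> hl hr; split=> z k x y; rewrite mulrDr -scalerAr ?hl ?hr. Qed.

Lemma bilinear_op_mulr B u v :
  bilinear_op B -> bilinear_op (fun x y => B (x * u) (y * v)).
Proof. by case=> hl hr; split=> z k x y; rewrite mulrDl -scalerAl ?hl ?hr. Qed.

End TensorTransfer.

Section LinearMaps.
Variables (K : fieldType) (A : algType K).

Lemma lin_functional0 (f : A -> K) : lin_functional f -> f 0 = 0.
Proof.
by move=> hf; have := hf 1 0 0; rewrite scale1r mul1r addr0 -[LHS]addr0 => /addrI.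
Qed.

Lemma lin_functionalZ (f : A -> K) k x : lin_functional f -> f (k *: x) = k * f x.
Proof. by move=> hf; rewrite -[k *: x]addr0 hf lin_functional0 // addr0. Qed.

Lemma lin_endo0 (f : A -> A) : lin_endo f -> f 0 = 0.
Proof.
by move=> hf; have := hf 1 0 0; rewrite !scale1r addr0 -[LHS]addr0 => /addrI.
Qed.

Lemma lin_endoZ (f : A -> A) k x : lin_endo f -> f (k *: x) = k *: f x.
Proof. by move=> hf; rewrite -[k *: x]addr0 hf lin_endo0 // addr0. Qed.

Lemma lin_endo_sum (f : A -> A) I (r : seq I) (F : I -> A) : lin_endo f ->
  f (\sum_(i <- r) F i) = \sum_(i <- r) f (F i).
Proof.
move=> hf; elim: r => [|i r IH]; first by rewrite !big_nil lin_endo0.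
by rewrite !big_cons -[F i]scale1r hf IH !scale1r.
Qed.

Lemma bilinear_op_scale_left (f : A -> K) :
  lin_functional f -> bilinear_op (fun x y : A => f x *: y).
Proof.
move=> hf; split=> z k x y; first by rewrite hf scalerDl scalerA.
by rewrite scalerDr !scalerA mulrC.
Qed.

End LinearMaps.

Section Bialgebra.
Variables (K : fieldType) (A : algType K) (W : lmodType K).
Variables (Delta : A -> seq (A * A)) (eps : A -> K).
Hypothesis bialg : is_bialgebra Delta eps.
Implicit Types B : A -> A -> W.

Lemma sum_Delta_linear B k a b : bilinear_op B ->
  \sum_(p <- Delta (k *: a + b)) B p.1 p.2 =
  k *: \sum_(p <- Delta a) B p.1 p.2 + \sum_(p <- Delta b) B p.1 p.2.
Proof.
move=> hB.
rewrite (teq_sum_bilinear (s := [seq (k *: p.1, p.2) | p <- Delta a] ++ Delta b)) //.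
  rewrite big_cat big_map scaler_sumr /=; congr (_ + _).
  by apply: eq_bigr => p _; rewrite bilinear_opZl.
move=> f g hf hg; rewrite (Delta_lin bialg) // /tpair big_cat big_map mulr_sumr.
by congr (_ + _); apply: eq_bigr => p _; rewrite /= lin_functionalZ // mulrA.
Qed.

Lemma sum_Delta0 B : bilinear_op B -> \sum_(p <- Delta 0) B p.1 p.2 = 0.
Proof.
move=> hB; have := sum_Delta_linear 1 0 0 hB.
by rewrite !scale1r !addr0 -[LHS]addr0 => /addrI.
Qed.

Lemma sum_Delta_sum B I (r : seq I) (F : I -> A) : bilinear_op B ->
  \sum_(p <- Delta (\sum_(i <- r) F i)) B p.1 p.2
    = \sum_(i <- r) \sum_(p <- Delta (F i)) B p.1 p.2.
Proof.
move=> hB; elim: r => [|i r IH]; first by rewrite !big_nil sum_Delta0.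
by rewrite !big_cons -[F i]scale1r sum_Delta_linear // IH !scale1r.
Qed.

Lemma sum_Delta_mul B a b : bilinear_op B ->
  \sum_(p <- Delta (a * b)) B p.1 p.2
    = \sum_(p <- Delta a) \sum_(q <- Delta b) B (p.1 * q.1) (p.2 * q.2).
Proof.
by move=> hB; rewrite (teq_sum_bilinear (Delta_mul bialg a b)) // big_allpairs_dep.
Qed.

Lemma counit_l_teq a t : teq (Delta a) t -> \sum_(p <- t) eps p.1 *: p.2 = a.
Proof.
move=> Dt; rewrite -(teq_sum_bilinear (B := fun x y => eps x *: y) Dt) ?counit_l //.
exact: bilinear_op_scale_left (eps_lin bialg).
Qed.

Lemma counit_r_teq a t : teq (Delta a) t -> \sum_(p <- t) eps p.2 *: p.1 = a.
Proof.
move=> Dt; rewrite -(teq_sum_bilinear (B := fun x y => eps y *: x) Dt) ?counit_r //.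
exact: bilinear_op_flip (bilinear_op_scale_left (eps_lin bialg)).
Qed.

End Bialgebra.

Section Factorization.
Variables (K : fieldType) (A : algType K).
Variables (Delta : A -> seq (A * A)) (eps : A -> K).
Variables (A1 A2 : {pred A}) (Pi1 Pi2 : A -> A).
Hypothesis bialg : is_bialgebra Delta eps.
Hypotheses (A1_subalg : subalg_closed A1) (A2_subalg : subalg_closed A2).
Hypothesis mu_onto : forall a : A, exists t : seq (A * A),
  (forall p, p \in t -> (p.1 \in A1) /\ (p.2 \in A2)) /\
  a = \sum_(p <- t) p.1 * p.2.
Hypothesis Delta_A1 : forall a : A, a \in A1 -> exists t : seq (A * A),
  teq (Delta a) t /\ (forall p, p \in t -> p.2 \in A1).
Hypothesis Delta_A2 : forall a : A, a \in A2 -> exists t : seq (A * A),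
  teq (Delta a) t /\ (forall p, p \in t -> p.1 \in A2).
Hypotheses (Pi1_lin : lin_endo Pi1) (Pi2_lin : lin_endo Pi2).
Hypothesis Pi1E : forall a1 a2, a1 \in A1 -> a2 \in A2 -> Pi1 (a1 * a2) = eps a2 *: a1.
Hypothesis Pi2E : forall a1 a2, a1 \in A1 -> a2 \in A2 -> Pi2 (a1 * a2) = eps a1 *: a2.

Lemma Pi1_mulr x a2 : a2 \in A2 -> Pi1 (x * a2) = eps a2 *: Pi1 x.
Proof.
move=> a2_A2; have [_ _ A2_mul] := A2_subalg; have [t [t_A12 ->]] := mu_onto x.
rewrite mulr_suml !(lin_endo_sum _ _ Pi1_lin) scaler_sumr.
apply: eq_big_seq => p /t_A12[p1 p2].
by rewrite -mulrA !Pi1E ?A2_mul // (eps_mul bialg) scalerA mulrC.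
Qed.

Lemma Pi2_mull a1 x : a1 \in A1 -> Pi2 (a1 * x) = eps a1 *: Pi2 x.
Proof.
move=> a1_A1; have [_ _ A1_mul] := A1_subalg; have [t [t_A12 ->]] := mu_onto x.
rewrite mulr_sumr !(lin_endo_sum _ _ Pi2_lin) scaler_sumr.
apply: eq_big_seq => p /t_A12[p1 p2].
by rewrite mulrA !Pi2E ?A1_mul // (eps_mul bialg) scalerA.
Qed.

Lemma Pi1_id a1 : a1 \in A1 -> Pi1 a1 = a1.
Proof.
have [A2_1 _ _] := A2_subalg.
by move=> a1_A1; rewrite -[a1 in LHS]mulr1 Pi1E // (eps_one bialg) scale1r.
Qed.

Lemma Pi2_id a2 : a2 \in A2 -> Pi2 a2 = a2.
Proof.
have [A1_1 _ _] := A1_subalg.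
by move=> a2_A2; rewrite -[a2 in LHS]mul1r Pi2E // (eps_one bialg) scale1r.
Qed.

Lemma bilinear_op_Pi_mul : bilinear_op (fun x y => Pi1 x * Pi2 y).
Proof.
split=> z k x y /=; first by rewrite Pi1_lin mulrDl scalerAl.
by rewrite Pi2_lin mulrDr scalerAr.
Qed.

Lemma mu_Pi_Delta_mul a1 a2 : a1 \in A1 -> a2 \in A2 ->
  \sum_(p <- Delta (a1 * a2)) Pi1 p.1 * Pi2 p.2 = a1 * a2.
Proof.
move=> a1_A1 a2_A2; have Pi_mul := bilinear_op_Pi_mul.
have [t1 [Dt1 t1_A1]] := Delta_A1 a1_A1.
have [t2 [Dt2 t2_A2]] := Delta_A2 a2_A2.
rewrite (sum_Delta_mul bialg (B := fun x y => Pi1 x * Pi2 y)) //.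
rewrite (teq_sum_bilinear (B := fun x y =>
  \sum_(q <- Delta a2) Pi1 (x * q.1) * Pi2 (y * q.2)) Dt1); last first.
  by apply: bilinear_op_sum => q; apply: bilinear_op_mulr Pi_mul.
rewrite exchange_big (teq_sum_bilinear (B := fun x y =>
  \sum_(p <- t1) Pi1 (p.1 * x) * Pi2 (p.2 * y)) Dt2); last first.
  by apply: bilinear_op_sum => p; apply: bilinear_op_mull Pi_mul.
rewrite exchange_big /=.
rewrite -(Pi1_id a1_A1) -(Pi2_id a2_A2) -(counit_r_teq bialg Dt1).
rewrite -(counit_l_teq bialg Dt2).
rewrite (lin_endo_sum _ _ Pi1_lin) (lin_endo_sum _ _ Pi2_lin) mulr_suml.
apply: eq_big_seq => p p_t1; rewrite mulr_sumr; apply: eq_big_seq => q q_t2.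
rewrite Pi1_mulr ?t2_A2 // Pi2_mull ?t1_A1 //.
rewrite (lin_endoZ _ _ Pi1_lin) (lin_endoZ _ _ Pi2_lin).
by rewrite -!scalerAl -!scalerAr !scalerA mulrC.
Qed.

End Factorization.

Theorem mainTheorem9 (K : fieldType) (A : algType K)
    (Delta : A -> seq (A * A)) (eps : A -> K)
    (A1 A2 : {pred A}) (Pi1 Pi2 : A -> A) :
  is_bialgebra Delta eps ->
  subalg_closed A1 -> subalg_closed A2 ->
  (forall a : A, exists t : seq (A * A),
      (forall p, p \in t -> (p.1 \in A1) /\ (p.2 \in A2)) /\
      a = \sum_(p <- t) p.1 * p.2) ->
  (forall t : seq (A * A),
      (forall p, p \in t -> (p.1 \in A1) /\ (p.2 \in A2)) ->
      \sum_(p <- t) p.1 * p.2 = 0 -> teq t [::]) ->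
  (forall a : A, a \in A1 -> exists t : seq (A * A),
      teq (Delta a) t /\ (forall p, p \in t -> p.2 \in A1)) ->
  (forall a : A, a \in A2 -> exists t : seq (A * A),
      teq (Delta a) t /\ (forall p, p \in t -> p.1 \in A2)) ->
  lin_endo Pi1 -> lin_endo Pi2 ->
  (forall a1 a2 : A, a1 \in A1 -> a2 \in A2 -> Pi1 (a1 * a2) = eps a2 *: a1) ->
  (forall a1 a2 : A, a1 \in A1 -> a2 \in A2 -> Pi2 (a1 * a2) = eps a1 *: a2) ->
  forall a : A, \sum_(p <- Delta a) Pi1 p.1 * Pi2 p.2 = a.
Proof.
(* Injectivity of mu is only needed for Pi1, Pi2 to be well defined;
   here they are given. *)
move=> bialg A1_subalg A2_subalg mu_onto _ Delta_A1 Delta_A2 Pi1_lin Pi2_lin Pi1E Pi2E a.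
have [t [t_A12 ->]] := mu_onto a.
rewrite (sum_Delta_sum bialg (B := fun x y => Pi1 x * Pi2 y)) //;
  last exact: bilinear_op_Pi_mul.
apply: eq_big_seq => p /t_A12[p1 p2].
by apply: (mu_Pi_Delta_mul bialg A1_subalg A2_subalg).
Qed.
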